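(* Let $\varphi=\frac{1+\sqrt5}{2}$. (i) If $x\in[0,1]\setminus\mathbb{Q}$ and all partial quotients of the continued fraction expansion of $x$ are at most $2$, then $g'_{\varphi^{-1}}(x)=+\infty$. (ii) There exists $y\in[0,1]\setminus\mathbb{Q}$ all of whose partial quotients are at most $3$ such that $g'_{\varphi^{-1}}(y)=0$.
   Context: For irrational $x\in(0,1)$, $x=[0;a_1,a_2,\ldots]$ is its regular continued fraction with partial quotients $a_i$. For $\lambda\in(0,1)$ the Denjoy–Tichy–Uitz function $g_\lambda:[0,1]\to[0,1]$ is defined by $g_\lambda(0)=0$, $g_\lambda(1)=1$, and, whenever $g_\lambda$ is defined at two consecutive Farey fractions $\frac pq<\frac rs$, $g_\lambda\!\left(\frac{p+r}{q+s}\right)=(1-\lambda)g_\lambda\!\left(\frac pq\right)+\lambda g_\lambda\!\left(\frac rs\right)$, extended by continuity. For irrational $x$, $g_{\varphi^{-1}}(x)=\sum_{i\ge1}(-1)^{i-1}\varphi^{-(a_1+2a_2+a_3+2a_4+\cdots+c_ia_i-1)}$ where $c_i=1$ for odd $i$ and $c_i=2$ for even $i$. Derivatives are two-sided and may equal $+\infty$. *)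

From Stdlib Require Import Reals Lra Lia ZArith.
From Coquelicot Require Import Coquelicot.
Open Scope R_scope.

Definition phi : R := (1 + sqrt 5) / 2.

Definition irrational (x : R) : Prop :=
  forall p q : Z, q <> 0%Z -> x <> IZR p / IZR q.

Definition gauss (t : R) : R := / t - IZR (Int_part (/ t)).

(** [pq x n] is the partial quotient a_{n+1} of x = [0; a_1, a_2, ...]:
    a_{n+1} = floor (1 / T^n(x)). *)
Definition pq (x : R) (n : nat) : Z := Int_part (/ (Nat.iter n gauss x)).

Definition farey_consecutive (p q r s : nat) : Prop :=
  (0 < q)%nat /\ (0 < s)%nat /\ (r <= s)%nat /\ (r * q = p * s + 1)%nat.

(** [g] is the Denjoy-Tichy-Uitz function g_lambda on [0,1]:
    g(0)=0, g(1)=1, the mediant rule at consecutive Farey fractions,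
    and g is continuous on [0,1] (the "extension by continuity"). *)
Definition is_DTU (lambda : R) (g : R -> R) : Prop :=
  g 0 = 0 /\ g 1 = 1 /\
  (forall p q r s : nat, farey_consecutive p q r s ->
     g ((INR p + INR r) / (INR q + INR s)) =
       (1 - lambda) * g (INR p / INR q) + lambda * g (INR r / INR s)) /\
  (forall t, 0 <= t <= 1 -> filterlim g (within (fun u => 0 <= u <= 1) (locally t)) (locally (g t))).

(* The mediant rule makes [g] increasing and acts multiplicatively on the
   cylinders of the continued fraction expansion.  Let [I_n] be the Farey interval
   between [p_n/q_n] and [(p_n + p_(n-1))/(q_n + q_(n-1))]; its length is
   [1/(q_n (q_n + q_(n-1)))], and the increment of [g] over [I_(n+1)] is the one
   over [I_n] times [mu^(a-1) (1 - mu)], where [a = a_(n+1)] and [mu] alternates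
   between [lam = 1/phi] and [1 - lam = lam^2].
   When all partial quotients are at most 3, a whole Farey interval carrying a
   fixed proportion of the increment and of the length of [I_n] separates [x] from
   either end of [I_(n+1)].  Hence a difference quotient of [g] at [x] is comparable
   to the slope [Q_n] (increment over length) of the last cylinder containing
   [x + h].  Two steps of the recursion multiply [Q_n] by at least 1.05 when all
   partial quotients are at most 2, and by at most 0.85 along [[0; 1, 3, 1, 3, ...]]. *)

From Stdlib Require Import Reals Lra Lia Psatz ZArith Znumtheory Classical.
From Coquelicot Require Import Coquelicot.
Open Scope R_scope.

Definition lam : R := / phi.

Lemma lam_eq : lam = (sqrt 5 - 1) / 2.
Proof.
  assert (H5 := sqrt_sqrt 5 ltac:(lra)). assert (H0 := sqrt_pos 5).
  unfold lam, phi. field_simplify_eq; nra.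
Qed.

Lemma lam_sq : lam * lam = 1 - lam.
Proof. assert (H5 := sqrt_sqrt 5 ltac:(lra)). rewrite lam_eq. nra. Qed.

Lemma lam_bounds : 0.618033 < lam < 0.618034.
Proof.
  assert (H5 := sqrt_sqrt 5 ltac:(lra)). assert (H0 := sqrt_pos 5).
  rewrite lam_eq. split; nra.
Qed.

Lemma pow_le_one_antimono x k l : 0 <= x <= 1 -> (k <= l)%nat -> x ^ l <= x ^ k.
Proof.
  intros Hx Hkl. replace l with (k + (l - k))%nat by lia. rewrite pow_add.
  pose proof (pow_le x k (proj1 Hx)). pose proof (pow_le x (l - k) (proj1 Hx)).
  pose proof (pow_incr x 1 (l - k) Hx). rewrite pow1 in *. nra.
Qed.

Lemma exit_index (P : nat -> Prop) (N K : nat) :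
  (N <= K)%nat -> P N -> ~ P K -> exists n, (N <= n)%nat /\ P n /\ ~ P (S n).
Proof.
  intros HNK HN HK. induction HNK as [|K HNK IH]; [contradiction|].
  destruct (classic (P K)) as [HPK|HPK].
  - exists K. auto.
  - destruct (IH HPK) as [n Hn]. exists n. tauto.
Qed.

Lemma ratio_bracket (u v gmin gmax l m : R) :
  0 < l -> l <= v <= m -> 0 <= gmin -> gmin <= u <= gmax -> gmin / m <= u / v <= gmax / l.
Proof.
  intros Hl Hv Hg Hu. unfold Rdiv.
  split; (apply Rmult_le_compat; [lra | apply Rlt_le, Rinv_0_lt_compat; lra | lra |
                                  apply Rinv_le_contravar; lra]).
Qed.

Lemma ball_R (x e y : R) : ball x e y <-> Rabs (y - x) < e.
Proof. reflexivity. Qed.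

(** * Derivatives at the common point of nested intervals *)

Section NestedIntervals.

Variables (f : R -> R) (lo hi : nat -> R) (x c1 c2 : R).

Definition slope (n : nat) : R := (f (hi n) - f (lo n)) / (hi n - lo n).

Hypothesis f_mono : forall s t, 0 <= s -> s <= t -> t <= 1 -> f s <= f t.
Hypothesis x_inside : forall n, 0 <= lo n < x /\ x < hi n <= 1.
Hypothesis length_cvg : is_lim_seq (fun n => hi n - lo n) 0.
Hypothesis c1_pos : 0 < c1.
Hypothesis c2_pos : 0 < c2.
Hypothesis gap_left : forall n, exists u v, lo (S n) <= u <= v /\ v <= x /\
  c1 * (f (hi n) - f (lo n)) <= f v - f u /\ c2 * (hi n - lo n) <= v - u.
Hypothesis gap_right : forall n, exists u v, x <= u <= v /\ v <= hi (S n) /\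
  c1 * (f (hi n) - f (lo n)) <= f v - f u /\ c2 * (hi n - lo n) <= v - u.

Let inside n z := lo n <= z <= hi n.

Lemma slope_nonneg n : 0 <= slope n.
Proof.
  destruct (x_inside n). unfold slope.
  apply Rdiv_le_0_compat; [|lra]. assert (f (lo n) <= f (hi n)) by (apply f_mono; lra). lra.
Qed.

(* The exit point of [x + h] lies beyond an endpoint of the next interval, so
   the whole gap on that side separates [x] from [x + h]. *)
Lemma quotient_bracket n h : h <> 0 -> inside n (x + h) -> ~ inside (S n) (x + h) ->
  c1 * slope n <= (f (x + h) - f x) / h <= slope n / c2.
Proof.
  intros Hh [Hlo Hhi] Hout. destruct (x_inside n) as [Xlo Xhi].
  destruct (x_inside (S n)) as [XSlo XShi].
  assert (Hpos : 0 < hi n - lo n) by lra.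
  replace (c1 * slope n) with (c1 * (f (hi n) - f (lo n)) / (hi n - lo n))
    by (unfold slope; field; lra).
  replace (slope n / c2) with ((f (hi n) - f (lo n)) / (c2 * (hi n - lo n)))
    by (unfold slope; field; lra).
  assert (G0 : 0 <= c1 * (f (hi n) - f (lo n))).
  { apply Rmult_le_pos; [lra|]. assert (f (lo n) <= f (hi n)) by (apply f_mono; lra). lra. }
  destruct (Rlt_or_le 0 h) as [Hp|Hn].
  - destruct (gap_right n) as [u [v [Huv [Hv [Gf Gl]]]]].
    assert (Hbeyond : hi (S n) < x + h) by (unfold inside in Hout; lra).
    pose proof (f_mono x u ltac:(lra) ltac:(lra) ltac:(lra)).
    pose proof (f_mono v (x + h) ltac:(lra) ltac:(lra) ltac:(lra)).
    pose proof (f_mono (lo n) x ltac:(lra) ltac:(lra) ltac:(lra)).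
    pose proof (f_mono (x + h) (hi n) ltac:(lra) ltac:(lra) ltac:(lra)).
    apply ratio_bracket; nra.
  - destruct (gap_left n) as [u [v [Huv [Hv [Gf Gl]]]]].
    assert (Hbeyond : x + h < lo (S n)) by (unfold inside in Hout; lra).
    pose proof (f_mono (x + h) u ltac:(lra) ltac:(lra) ltac:(lra)).
    pose proof (f_mono v x ltac:(lra) ltac:(lra) ltac:(lra)).
    pose proof (f_mono (lo n) (x + h) ltac:(lra) ltac:(lra) ltac:(lra)).
    pose proof (f_mono x (hi n) ltac:(lra) ltac:(lra) ltac:(lra)).
    replace ((f (x + h) - f x) / h) with ((f x - f (x + h)) / - h) by (field; lra).
    apply ratio_bracket; nra.
Qed.

Lemma eventually_exit N : exists eps : posreal, forall h, h <> 0 -> Rabs h < eps ->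
  exists n, (N <= n)%nat /\ inside n (x + h) /\ ~ inside (S n) (x + h).
Proof.
  destruct (x_inside N) as [XN1 XN2].
  assert (Heps : 0 < Rmin (x - lo N) (hi N - x)) by (apply Rmin_glb_lt; lra).
  exists (mkposreal _ Heps). simpl. intros h Hh0 Hh.
  pose proof (Rmin_l (x - lo N) (hi N - x)). pose proof (Rmin_r (x - lo N) (hi N - x)).
  apply Rabs_lt_between in Hh.
  apply is_lim_seq_spec in length_cvg.
  destruct (length_cvg (mkposreal (Rabs h) (Rabs_pos_lt h Hh0))) as [K HK].
  apply (exit_index (fun n => inside n (x + h)) N (N + K)); [lia | unfold inside; lra |].
  specialize (HK (N + K)%nat ltac:(lia)). simpl in HK. rewrite Rminus_0_r in HK.
  destruct (x_inside (N + K)). unfold inside. intros Hin.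
  rewrite Rabs_right in HK by lra. revert HK. unfold Rabs. destruct (Rcase_abs h); lra.
Qed.

Theorem derivative_p_infty_of_slope : is_lim_seq slope p_infty ->
  is_lim (fun h => (f (x + h) - f x) / h) 0 p_infty.
Proof.
  intros Hs. apply is_lim_spec. intro M. apply is_lim_seq_spec in Hs.
  destruct (Hs (M / c1)) as [N HN].
  destruct (eventually_exit N) as [eps Heps].
  exists eps. intros h Hball Hh0. rewrite ball_R, Rminus_0_r in Hball.
  destruct (Heps h Hh0 Hball) as [n [Hn [Hin Hout]]].
  destruct (quotient_bracket n h Hh0 Hin Hout) as [Q _].
  specialize (HN n Hn). apply (Rmult_lt_compat_l c1) in HN; [|lra].
  replace (c1 * (M / c1)) with M in HN by (field; lra). lra.
Qed.

Theorem derivative_zero_of_slope : is_lim_seq slope 0 -> is_derive f x 0.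
Proof.
  intros Hs. apply is_derive_Reals. intros eps Heps. apply is_lim_seq_spec in Hs.
  destruct (Hs (mkposreal (eps * c2) ltac:(apply Rmult_lt_0_compat; lra))) as [N HN].
  destruct (eventually_exit N) as [delta Hdelta].
  exists delta. intros h Hh0 Hh.
  destruct (Hdelta h Hh0 Hh) as [n [Hn [Hin Hout]]].
  destruct (quotient_bracket n h Hh0 Hin Hout) as [Q1 Q2].
  specialize (HN n Hn). simpl in HN. rewrite Rminus_0_r, Rabs_right in HN
    by (apply Rle_ge, slope_nonneg).
  pose proof (slope_nonneg n).
  assert (slope n / c2 < eps) by (apply Rlt_div_l; lra).
  assert (0 <= c1 * slope n) by (apply Rmult_le_pos; lra).
  rewrite Rminus_0_r, Rabs_right; lra.
Qed.

End NestedIntervals.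

(** * Farey pairs and the mediant rule *)

Definition ratio (u : nat * nat) : R := INR (fst u) / INR (snd u).
Definition mediant (u v : nat * nat) : nat * nat := (fst u + fst v, snd u + snd v)%nat.
Definition farey (u v : nat * nat) : Prop := farey_consecutive (fst u) (snd u) (fst v) (snd v).
Definition farey_or (b : bool) (u v : nat * nat) : Prop := if b then farey u v else farey v u.

Lemma mediant_comm u v : mediant u v = mediant v u.
Proof. unfold mediant. f_equal; lia. Qed.

Lemma farey_mediant_l u v : farey u v -> farey u (mediant u v).
Proof. destruct u, v; unfold farey, farey_consecutive, mediant; simpl. nia. Qed.

Lemma farey_mediant_r u v : farey u v -> farey (mediant u v) v.
Proof. destruct u, v; unfold farey, farey_consecutive, mediant; simpl. nia. Qed.

Lemma farey_or_mediant_l b u v : farey_or b u v -> farey_or b u (mediant u v).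
Proof.
  destruct b; simpl; [apply farey_mediant_l|]. rewrite mediant_comm. apply farey_mediant_r.
Qed.

Lemma farey_or_mediant_r b u v : farey_or b u v -> farey_or b (mediant u v) v.
Proof.
  destruct b; simpl; [apply farey_mediant_r|]. rewrite mediant_comm. apply farey_mediant_l.
Qed.

Lemma farey_ratio_sub u v : farey u v -> ratio v - ratio u = / (INR (snd u) * INR (snd v)).
Proof.
  destruct u as [p q], v as [r s]; unfold farey, farey_consecutive, ratio; simpl.
  intros [Hq [Hs [_ E]]]. apply lt_0_INR in Hq, Hs.
  apply (f_equal INR) in E. rewrite !plus_INR, !mult_INR in E. simpl in E.
  field_simplify_eq; lra.
Qed.

Lemma farey_ratio_lt u v : farey u v -> ratio u < ratio v.
Proof.
  intro H. pose proof (farey_ratio_sub u v H) as E.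
  destruct H as [Hq [Hs _]]. apply lt_0_INR in Hq, Hs.
  assert (0 < / (INR (snd u) * INR (snd v))) by (apply Rinv_0_lt_compat; nra). lra.
Qed.

Lemma farey_ratio_range u v : farey u v -> (0 <= ratio u <= 1) /\ (0 <= ratio v <= 1).
Proof.
  destruct u as [p q], v as [r s]; unfold farey, farey_consecutive, ratio; simpl.
  intros [Hq [Hs [Hrs E]]]. assert (Hpq : (p <= q)%nat) by nia.
  apply le_INR in Hpq, Hrs. apply lt_0_INR in Hq, Hs.
  pose proof (pos_INR p). pose proof (pos_INR r).
  split; split; try (apply Rdiv_le_0_compat; lra); apply Rle_div_l; lra.
Qed.

Lemma farey_or_ratio_dist b u v : farey_or b u v ->
  Rabs (ratio v - ratio u) = / (INR (snd u) * INR (snd v)).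
Proof.
  destruct b; simpl; intro H; pose proof (farey_ratio_sub _ _ H); pose proof (farey_ratio_lt _ _ H).
  - rewrite Rabs_right; lra.
  - rewrite Rabs_left by lra. rewrite (Rmult_comm (INR (snd u))). lra.
Qed.

Fixpoint mediant_iter (u w : nat * nat) (j : nat) : nat * nat :=
  match j with O => w | S j => mediant u (mediant_iter u w j) end.

Lemma mediant_iter_eq u w j : mediant_iter u w j = (j * fst u + fst w, j * snd u + snd w)%nat.
Proof. destruct u, w. induction j; simpl; rewrite ?IHj; unfold mediant; simpl; f_equal; lia. Qed.

Lemma farey_or_mediant_iter b u w j : farey_or b u w -> farey_or b u (mediant_iter u w j).
Proof. intro H. induction j; simpl; auto. now apply farey_or_mediant_l. Qed.

Lemma farey_or_mediant_iter_succ b u w j : farey_or b u w ->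
  farey_or b (mediant_iter u w (S j)) (mediant_iter u w j).
Proof. intro H. simpl. apply farey_or_mediant_r, farey_or_mediant_iter, H. Qed.

Lemma mediant_iter_between b u w j : farey_or b u w ->
  if b then ratio u < ratio (mediant_iter u w j) <= ratio w
  else ratio w <= ratio (mediant_iter u w j) < ratio u.
Proof.
  intro H. induction j as [|j IH].
  - destruct b; cbn [farey_or mediant_iter] in *; apply farey_ratio_lt in H; lra.
  - pose proof (farey_or_mediant_iter_succ b u w j H) as Hs.
    pose proof (farey_or_mediant_iter b u w (S j) H) as Hu.
    destruct b; cbn [farey_or] in Hs, Hu; apply farey_ratio_lt in Hs, Hu; lra.
Qed.

(** * Monotonicity *)

Fixpoint stern_brocot (y : R) (k : nat) : (nat * nat) * (nat * nat) :=
  match k with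
  | O => ((0, 1), (1, 1))%nat
  | S k => let (u, v) := stern_brocot y k in
           if Rle_dec y (ratio (mediant u v)) then (u, mediant u v) else (mediant u v, v)
  end.

Lemma stern_brocot_spec y k : 0 <= y <= 1 ->
  let (u, v) := stern_brocot y k in
  farey u v /\ ratio u <= y <= ratio v /\ (k + 2 <= snd u + snd v)%nat.
Proof.
  intros Hy. induction k as [|k IH]; simpl.
  - unfold ratio, farey, farey_consecutive; simpl. repeat split; try lia; lra.
  - destruct (stern_brocot y k) as [u v]. destruct IH as [Huv [Hy' Hq]].
    pose proof Huv as [Hu [Hv _]].
    destruct (Rle_dec y (ratio (mediant u v))).
    + split; [now apply farey_mediant_l|]. split; [lra|]. simpl. lia.
    + split; [now apply farey_mediant_r|]. split; [lra|]. simpl. lia.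
Qed.

Lemma stern_brocot_length y k : 0 <= y <= 1 ->
  let (u, v) := stern_brocot y k in ratio v - ratio u <= / INR (S k).
Proof.
  intros Hy. pose proof (stern_brocot_spec y k Hy) as Hs.
  destruct (stern_brocot y k) as [u v]. destruct Hs as [Huv [_ Hq]].
  rewrite (farey_ratio_sub u v Huv). destruct Huv as [Hu [Hv _]].
  apply Rinv_le_contravar; [apply lt_0_INR; lia|].
  rewrite <- mult_INR. apply le_INR. nia.
Qed.

Section DTU.

Variable g : R -> R.
Hypothesis g_DTU : is_DTU lam g.

Definition weight (b : bool) : R := if b then lam else 1 - lam.

Lemma g_mediant u v : farey u v ->
  g (ratio (mediant u v)) = (1 - lam) * g (ratio u) + lam * g (ratio v).
Proof.
  destruct u as [p q], v as [r s]. unfold farey, ratio, mediant; simpl. intro H.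
  destruct g_DTU as [_ [_ [Hm _]]]. rewrite !plus_INR. now apply Hm.
Qed.

Lemma g_mediant_or b u v : farey_or b u v ->
  g (ratio (mediant u v)) - g (ratio u) = weight b * (g (ratio v) - g (ratio u)).
Proof.
  destruct b; simpl; intro H.
  - rewrite (g_mediant u v H). ring.
  - rewrite mediant_comm, (g_mediant v u H). ring.
Qed.

Lemma g_mediant_iter b u w j : farey_or b u w ->
  g (ratio (mediant_iter u w j)) - g (ratio u) = weight b ^ j * (g (ratio w) - g (ratio u)).
Proof.
  intro H. induction j as [|j IH]; simpl; [ring|].
  rewrite (g_mediant_or b u _ (farey_or_mediant_iter b u w j H)), IH. ring.
Qed.


Lemma g_stern_brocot_le y k : 0 <= y <= 1 ->
  g (ratio (fst (stern_brocot y k))) <= g (ratio (snd (stern_brocot y k))).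
Proof.
  intros Hy. induction k as [|k IH].
  - destruct g_DTU as [G0 [G1 _]]. unfold ratio; simpl.
    rewrite Rdiv_0_l, Rdiv_1_r, G0, G1. lra.
  - pose proof (stern_brocot_spec y k Hy) as Hs. simpl.
    destruct (stern_brocot y k) as [u v]. destruct Hs as [Huv _]. simpl in IH.
    pose proof (g_mediant u v Huv). pose proof lam_bounds.
    destruct (Rle_dec y (ratio (mediant u v))); simpl; nra.
Qed.

Lemma g_stern_brocot_nested y j k : 0 <= y <= 1 -> (j <= k)%nat ->
  g (ratio (fst (stern_brocot y j))) <= g (ratio (fst (stern_brocot y k))) /\
  g (ratio (snd (stern_brocot y k))) <= g (ratio (snd (stern_brocot y j))).
Proof.
  intros Hy Hjk. induction Hjk as [|k Hjk IH]; [lra|].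
  pose proof (stern_brocot_spec y k Hy) as Hs. pose proof (g_stern_brocot_le y k Hy) as Hle.
  simpl. destruct (stern_brocot y k) as [u v]. destruct Hs as [Huv _]. simpl in *.
  pose proof (g_mediant u v Huv). pose proof lam_bounds.
  destruct (Rle_dec y (ratio (mediant u v))); simpl; split; nra.
Qed.

Lemma g_continuous_at y : 0 <= y <= 1 -> forall eps, 0 < eps -> exists delta, 0 < delta /\
  forall z, 0 <= z <= 1 -> Rabs (z - y) < delta -> Rabs (g z - g y) < eps.
Proof.
  intros Hy eps Heps. destruct g_DTU as [_ [_ [_ Hc]]].
  specialize (Hc y Hy). rewrite filterlim_locally in Hc.
  destruct (Hc (mkposreal eps Heps)) as [delta Hd].
  exists delta. split; [apply cond_pos|]. intros z Hz Hzy. apply (Hd z); assumption.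
Qed.

Lemma g_approach y (s : nat -> R) : 0 <= y <= 1 -> (forall j, 0 <= s j <= 1) ->
  (forall j, Rabs (s j - y) <= / INR (S j)) ->
  forall k eps, 0 < eps -> exists j, (k <= j)%nat /\ Rabs (g (s j) - g y) < eps.
Proof.
  intros Hy Hs Hsy k eps Heps. destruct (g_continuous_at y Hy eps Heps) as [d [Hd Hc]].
  destruct (archimed_cor1 d Hd) as [N [HN HN0]].
  exists (k + N)%nat. split; [lia|]. apply Hc; [apply Hs|].
  eapply Rle_lt_trans; [apply Hsy|]. eapply Rle_lt_trans; [|apply HN].
  apply Rinv_le_contravar; [apply lt_0_INR; lia | apply le_INR; lia].
Qed.

Lemma stern_brocot_approach y j : 0 <= y <= 1 ->
  (0 <= ratio (fst (stern_brocot y j)) <= 1 /\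
   Rabs (ratio (fst (stern_brocot y j)) - y) <= / INR (S j)) /\
  (0 <= ratio (snd (stern_brocot y j)) <= 1 /\
   Rabs (ratio (snd (stern_brocot y j)) - y) <= / INR (S j)).
Proof.
  intro Hy. pose proof (stern_brocot_spec y j Hy) as Hs.
  pose proof (stern_brocot_length y j Hy) as Hl.
  destruct (stern_brocot y j) as [u v]. destruct Hs as [Huv [Hb _]].
  destruct (farey_ratio_range u v Huv). cbn [fst snd]. split; (split; [tauto | apply Rabs_le; lra]).
Qed.

Lemma g_stern_brocot_bracket y k : 0 <= y <= 1 ->
  g (ratio (fst (stern_brocot y k))) <= g y <= g (ratio (snd (stern_brocot y k))).
Proof.
  intros Hy. pose proof (fun j => stern_brocot_approach y j Hy) as A.
  split; apply Rnot_lt_le; intro Hlt.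
  - destruct (g_approach y (fun j => ratio (fst (stern_brocot y j))) Hy
      (fun j => proj1 (proj1 (A j))) (fun j => proj2 (proj1 (A j)))
      k _ (proj2 (Rlt_0_minus _ _) Hlt)) as [j [Hkj Hj]].
    destruct (g_stern_brocot_nested y k j Hy Hkj). apply Rabs_lt_between in Hj. lra.
  - destruct (g_approach y (fun j => ratio (snd (stern_brocot y j))) Hy
      (fun j => proj1 (proj2 (A j))) (fun j => proj2 (proj2 (A j)))
      k _ (proj2 (Rlt_0_minus _ _) Hlt)) as [j [Hkj Hj]].
    destruct (g_stern_brocot_nested y k j Hy Hkj). apply Rabs_lt_between in Hj. lra.
Qed.

(* Points that share their Stern-Brocot interval up to the step where they part
   are separated by a mediant. *)
Lemma g_stern_brocot_split s t k : 0 <= s -> s < t -> t <= 1 ->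
  stern_brocot s k = stern_brocot t k \/ g s <= g t.
Proof.
  intros Hs Hst Ht. induction k as [|k [E|E]]; [now left | | now right].
  pose proof (g_stern_brocot_bracket s (S k) ltac:(lra)) as Bs.
  pose proof (g_stern_brocot_bracket t (S k) ltac:(lra)) as Bt.
  simpl in Bs, Bt |- *. rewrite E in Bs |- *. destruct (stern_brocot t k) as [u v].
  destruct (Rle_dec s (ratio (mediant u v))), (Rle_dec t (ratio (mediant u v)));
    simpl in *; first [now left | right; lra | lra].
Qed.

Lemma g_mono s t : 0 <= s -> s <= t -> t <= 1 -> g s <= g t.
Proof.
  intros Hs Hst Ht. destruct (Req_dec s t) as [->|Hne]; [lra|].
  destruct (archimed_cor1 (t - s) ltac:(lra)) as [N [HN HN0]].
  destruct (g_stern_brocot_split s t N Hs ltac:(lra) Ht) as [E|]; [|assumption].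
  pose proof (stern_brocot_length s N ltac:(lra)) as Ls.
  pose proof (stern_brocot_spec s N ltac:(lra)) as Ss.
  pose proof (stern_brocot_spec t N ltac:(lra)) as St.
  rewrite E in Ls, Ss. destruct (stern_brocot t N) as [u v].
  assert (/ INR (S N) <= / INR N)
    by (apply Rinv_le_contravar; [apply lt_0_INR | apply le_INR]; lia).
  lra.
Qed.

End DTU.

(** * Continued fraction cylinders *)

(* [convergents a n = ((p_(n-1), q_(n-1)), (p_n, q_n))] for [[0; a 0, a 1, ...]],
   starting from [(p_(-1), q_(-1)) = (1, 0)]. *)
Fixpoint convergents (a : nat -> nat) (n : nat) : (nat * nat) * (nat * nat) :=
  match n with
  | O => ((1, 0), (0, 1))%nat
  | S n => let (B, A) := convergents a n in
           (A, (a n * fst A + fst B, a n * snd A + snd B)%nat)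
  end.

Definition conv a n := snd (convergents a n).
Definition conv_prev a n := fst (convergents a n).
Definition cyl_end a n := mediant (conv a n) (conv_prev a n).

(* The cylinder of depth [n]: the real numbers whose expansion starts with
   [a 0, ..., a (n-1)], i.e. the Farey interval between [conv] and [cyl_end]. *)
Definition cyl_lo a n := if Nat.even n then ratio (conv a n) else ratio (cyl_end a n).
Definition cyl_hi a n := if Nat.even n then ratio (cyl_end a n) else ratio (conv a n).
Definition cyl_den a n := INR (snd (conv a n)) * INR (snd (cyl_end a n)).

Lemma conv_succ a n : conv a (S n) =
  (a n * fst (conv a n) + fst (conv_prev a n), a n * snd (conv a n) + snd (conv_prev a n))%nat.
Proof. unfold conv, conv_prev; simpl; destruct (convergents a n); reflexivity. Qed.

Lemma conv_prev_succ a n : conv_prev a (S n) = conv a n.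
Proof. unfold conv, conv_prev; simpl; destruct (convergents a n); reflexivity. Qed.

Lemma even_succ n : Nat.even (S n) = negb (Nat.even n).
Proof. rewrite Nat.even_succ, <- Nat.negb_even. reflexivity. Qed.

Section Convergents.

Variable a : nat -> nat.
Hypothesis a_pos : forall k, (1 <= a k)%nat.

Lemma conv_spec n :
  let (p, q) := conv a n in let (p', q') := conv_prev a n in
  (0 < q /\ p <= q /\ p + p' <= q + q' /\ q' <= q /\
   if Nat.even n then p' * q = p * q' + 1 else p * q' = p' * q + 1)%nat.
Proof.
  induction n as [|n IH]; [simpl; lia|].
  rewrite conv_succ, conv_prev_succ, even_succ. specialize (a_pos n).
  destruct (conv a n) as [p q], (conv_prev a n) as [p' q']. simpl.
  destruct (Nat.even n); simpl; nia.
Qed.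

Lemma conv_den_pos n : (0 < snd (conv a n))%nat /\ (snd (conv_prev a n) <= snd (conv a n))%nat.
Proof. pose proof (conv_spec n). destruct (conv a n), (conv_prev a n). simpl. lia. Qed.

Lemma cyl_farey n : farey_or (Nat.even n) (conv a n) (cyl_end a n).
Proof.
  pose proof (conv_spec n) as H. unfold cyl_end.
  destruct (conv a n) as [p q], (conv_prev a n) as [p' q'].
  destruct (Nat.even n); unfold farey_or, farey, farey_consecutive, mediant; simpl; nia.
Qed.

Lemma conv_succ_iter n : conv a (S n) = mediant_iter (conv a n) (cyl_end a n) (a n - 1).
Proof.
  rewrite mediant_iter_eq, conv_succ. unfold cyl_end, mediant. specialize (a_pos n).
  destruct (conv a n), (conv_prev a n); simpl. f_equal; nia.
Qed.

Lemma cyl_end_succ_iter n : cyl_end a (S n) = mediant_iter (conv a n) (cyl_end a n) (a n).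
Proof.
  unfold cyl_end at 1. rewrite mediant_iter_eq, conv_succ, conv_prev_succ.
  unfold cyl_end, mediant. destruct (conv a n), (conv_prev a n); simpl. f_equal; nia.
Qed.

Lemma cyl_length n : cyl_hi a n - cyl_lo a n = / cyl_den a n.
Proof.
  pose proof (farey_or_ratio_dist _ _ _ (cyl_farey n)) as D.
  pose proof (mediant_iter_between _ _ _ 0 (cyl_farey n)) as B.
  unfold cyl_hi, cyl_lo, cyl_den. simpl in B.
  destruct (Nat.even n); [rewrite Rabs_right in D | rewrite Rabs_left in D]; lra.
Qed.

Lemma cyl_range n : 0 <= cyl_lo a n /\ cyl_lo a n < cyl_hi a n /\ cyl_hi a n <= 1.
Proof.
  pose proof (cyl_farey n) as H. unfold cyl_hi, cyl_lo.
  destruct (Nat.even n); simpl in H; pose proof (farey_ratio_lt _ _ H);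
    destruct (farey_ratio_range _ _ H); lra.
Qed.

Lemma cyl_nested n : cyl_lo a n <= cyl_lo a (S n) /\ cyl_hi a (S n) <= cyl_hi a n.
Proof.
  pose proof (mediant_iter_between _ _ _ (a n) (cyl_farey n)) as B1.
  pose proof (mediant_iter_between _ _ _ (a n - 1) (cyl_farey n)) as B2.
  unfold cyl_lo, cyl_hi. rewrite even_succ, conv_succ_iter, cyl_end_succ_iter.
  destruct (Nat.even n); simpl; lra.
Qed.

Lemma cyl_lo_mono j k : (j <= k)%nat -> cyl_lo a j <= cyl_lo a k /\ cyl_hi a k <= cyl_hi a j.
Proof.
  intro Hjk. induction Hjk as [|k _ IH]; [lra|]. pose proof (cyl_nested k). lra.
Qed.

Lemma cyl_den_lower n : INR (S n) <= cyl_den a n.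
Proof.
  unfold cyl_den, cyl_end. rewrite <- mult_INR. apply le_INR.
  induction n as [|n IH]; [simpl; lia|].
  unfold mediant in *. rewrite conv_succ, conv_prev_succ in *. simpl in *.
  destruct (conv_den_pos n). specialize (a_pos n). nia.
Qed.

Lemma cyl_length_cvg : is_lim_seq (fun n => cyl_hi a n - cyl_lo a n) 0.
Proof.
  apply is_lim_seq_le_le with (u := fun _ => 0) (w := fun n => / INR (S n)).
  - intro n. rewrite cyl_length. pose proof (cyl_den_lower n).
    assert (0 < INR (S n)) by (apply lt_0_INR; lia).
    split; [apply Rlt_le, Rinv_0_lt_compat; lra | apply Rinv_le_contravar; lra].
  - apply is_lim_seq_const.
  - replace (Finite 0) with (Rbar_inv p_infty) by reflexivity.
    apply is_lim_seq_inv; [|discriminate].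
    apply (is_lim_seq_incr_1 INR), is_lim_seq_INR.
Qed.

End Convergents.

Definition pq_nat (x : R) (n : nat) : nat := Z.to_nat (pq x n).

Lemma gauss_step t : 0 < t < 1 ->
  (1 <= Int_part (/ t))%Z /\ 0 <= gauss t < 1 /\
  INR (Z.to_nat (Int_part (/ t))) = IZR (Int_part (/ t)).
Proof.
  intros Ht. destruct (base_Int_part (/ t)) as [H1 H2].
  assert (1 < / t) by (rewrite <- Rinv_1; apply Rinv_lt_contravar; lra).
  assert (Hz : (0 < Int_part (/ t))%Z) by (apply lt_IZR; lra).
  unfold gauss. rewrite INR_IZR_INZ, Z2Nat.id by lia. repeat split; lia || lra.
Qed.

Lemma irrational_not_ratio x m n : irrational x -> (0 < n)%nat -> x <> INR m / INR n.
Proof.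
  intros Hx Hn. rewrite !INR_IZR_INZ. apply Hx. lia.
Qed.

Lemma continued_fraction x : 0 <= x <= 1 -> irrational x -> forall n,
  0 < Nat.iter n gauss x < 1 /\
  let (p, q) := conv (pq_nat x) n in let (p', q') := conv_prev (pq_nat x) n in
  (0 < q)%nat /\ x = (INR p + Nat.iter n gauss x * INR p') / (INR q + Nat.iter n gauss x * INR q').
Proof.
  intros Hx Hirr.
  assert (H0 : x <> INR 0 / INR 1) by (apply irrational_not_ratio; [assumption | lia]).
  assert (H1 : x <> INR 1 / INR 1) by (apply irrational_not_ratio; [assumption | lia]).
  simpl in H0, H1. rewrite Rdiv_0_l in H0. rewrite Rdiv_1_r in H1.
  induction n as [|n [Ht IH]].
  { simpl. split; [|split; [lia | field]]. destruct Hx as [Hx0 Hx1].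
    destruct (Rle_lt_or_eq_dec _ _ Hx0), (Rle_lt_or_eq_dec _ _ Hx1); subst; lra || congruence. }
  destruct (gauss_step _ Ht) as [Z1 [Z2 Z3]].
  rewrite conv_succ, conv_prev_succ.
  set (t := Nat.iter n gauss x) in *.
  assert (Ea : pq_nat x n = Z.to_nat (Int_part (/ t))) by reflexivity. rewrite Ea.
  change (Nat.iter (S n) gauss x) with (gauss t).
  set (z := Int_part (/ t)) in *. set (t' := gauss t) in *.
  assert (Ht' : t = / (IZR z + t'))
    by (unfold t', gauss; fold z; rewrite Rplus_minus, Rinv_inv; reflexivity).
  destruct (conv (pq_nat x) n) as [p q], (conv_prev (pq_nat x) n) as [p' q'].
  destruct IH as [Hq IH]. cbn [fst snd].
  assert (Hz : 1 <= IZR z) by (apply IZR_le; lia).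
  assert (Hqz : (0 < Z.to_nat z * q + q')%nat) by nia.
  split; [|split; [exact Hqz|]].
  2:{ rewrite !plus_INR, !mult_INR, Z3, IH, Ht'. apply lt_0_INR in Hq.
      pose proof (pos_INR p'). pose proof (pos_INR q'). field. split; nra. }
  split; [|lra]. destruct Z2 as [[Hpos|Hzero] _]; [exact Hpos|]. exfalso.
  apply (irrational_not_ratio x (Z.to_nat z * p + p') _ Hirr Hqz).
  rewrite !plus_INR, !mult_INR, Z3, IH, Ht', <- Hzero, Rplus_0_r. apply lt_0_INR in Hq.
  pose proof (pos_INR p'). pose proof (pos_INR q'). field. split; nra.
Qed.

Lemma pq_nat_pos x : 0 <= x <= 1 -> irrational x -> forall n, (1 <= pq_nat x n)%nat.
Proof.
  intros Hx Hi n. destruct (continued_fraction x Hx Hi n) as [Ht _].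
  destruct (gauss_step _ Ht) as [Z1 _]. unfold pq_nat, pq. lia.
Qed.

Lemma Rdiv_lt_cross a b c d : 0 < b -> 0 < d -> a * d < c * b -> a / b < c / d.
Proof.
  intros Hb Hd H. apply Rminus_lt.
  replace (a / b - c / d) with ((a * d - c * b) / (b * d)) by (field; lra).
  apply Rdiv_neg_pos; nra.
Qed.

Lemma in_cylinders x : 0 <= x <= 1 -> irrational x ->
  forall n, cyl_lo (pq_nat x) n < x < cyl_hi (pq_nat x) n.
Proof.
  intros Hx Hi n. pose proof (pq_nat_pos x Hx Hi) as Ha.
  destruct (continued_fraction x Hx Hi n) as [Ht Hc]. pose proof (conv_spec _ Ha n) as Hs.
  unfold cyl_lo, cyl_hi, cyl_end. set (t := Nat.iter n gauss x) in *.
  destruct (conv (pq_nat x) n) as [p q], (conv_prev (pq_nat x) n) as [p' q'].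
  destruct Hc as [Hq Ex]. destruct Hs as [_ [_ [_ [_ Hd]]]].
  unfold ratio, mediant; cbn [fst snd]. rewrite !plus_INR, Ex.
  apply lt_0_INR in Hq. pose proof (pos_INR q').
  destruct (Nat.even n); apply (f_equal INR) in Hd; rewrite !plus_INR, !mult_INR in Hd;
    simpl in Hd; split; apply Rdiv_lt_cross; nra.
Qed.

(** * Gaps and difference quotients *)

Definition cyl_incr (g : R -> R) a n := g (cyl_hi a n) - g (cyl_lo a n).
Definition cyl_slope (g : R -> R) a n := cyl_incr g a n * cyl_den a n.

Section CylinderIncrements.

Variables (g : R -> R) (a : nat -> nat).
Hypothesis g_DTU : is_DTU lam g.
Hypothesis a_pos : forall k, (1 <= a k)%nat.

Lemma g_mediant_iter_cyl n j :
  g (ratio (mediant_iter (conv a n) (cyl_end a n) j)) - g (ratio (conv a n)) =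
  weight (Nat.even n) ^ j * (g (ratio (cyl_end a n)) - g (ratio (conv a n))).
Proof. apply g_mediant_iter; [exact g_DTU | apply cyl_farey, a_pos]. Qed.

Lemma cyl_incr_0 : cyl_incr g a 0 = 1.
Proof.
  destruct g_DTU as [G0 [G1 _]]. unfold cyl_incr, cyl_hi, cyl_lo, cyl_end, ratio, mediant; simpl.
  rewrite Rdiv_0_l, Rdiv_1_r, G0, G1. ring.
Qed.

Lemma cyl_incr_succ n : cyl_incr g a (S n) =
  weight (Nat.even n) ^ (a n - 1) * (1 - weight (Nat.even n)) * cyl_incr g a n.
Proof.
  pose proof (g_mediant_iter_cyl n (a n)) as E1. pose proof (g_mediant_iter_cyl n (a n - 1)) as E2.
  replace (a n) with (S (a n - 1)) in E1 at 2 by (specialize (a_pos n); lia).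
  unfold cyl_incr, cyl_hi, cyl_lo.
  rewrite even_succ, (conv_succ_iter a a_pos), (cyl_end_succ_iter a).
  simpl pow in E1. destruct (Nat.even n); cbn [negb];
    set (P := g (ratio (conv a n))) in *;
    set (A1 := g (ratio (mediant_iter (conv a n) (cyl_end a n) (a n)))) in *;
    set (A0 := g (ratio (mediant_iter (conv a n) (cyl_end a n) (a n - 1)))) in *.
  - replace (A0 - A1) with ((A0 - P) - (A1 - P)) by ring. rewrite E1, E2. ring.
  - replace (A1 - A0) with ((A1 - P) - (A0 - P)) by ring. rewrite E1, E2. ring.
Qed.

Lemma weight_bounds b : lam * lam <= weight b <= lam /\ lam * lam <= 1 - weight b <= lam.
Proof. pose proof lam_bounds. pose proof lam_sq. destruct b; simpl; nra. Qed.

Lemma cyl_incr_nonneg n : 0 <= cyl_incr g a n.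
Proof.
  induction n as [|n IH]; [rewrite cyl_incr_0; lra|]. rewrite cyl_incr_succ.
  destruct (weight_bounds (Nat.even n)). pose proof lam_bounds.
  repeat apply Rmult_le_pos; try apply pow_le; nra.
Qed.

Lemma cyl_slope_nonneg n : 0 <= cyl_slope g a n.
Proof.
  apply Rmult_le_pos; [apply cyl_incr_nonneg | unfold cyl_den; apply Rmult_le_pos; apply pos_INR].
Qed.

(* The gap between [conv a n] and the nearer end of the next cylinder. *)
Lemma cyl_gap n :
  (if Nat.even n then g (cyl_lo a (S n)) - g (cyl_lo a n) else g (cyl_hi a n) - g (cyl_hi a (S n)))
    = weight (Nat.even n) ^ a n * cyl_incr g a n /\
  (if Nat.even n then cyl_lo a (S n) - cyl_lo a n else cyl_hi a n - cyl_hi a (S n))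
    = / (INR (snd (conv a n)) * INR (snd (cyl_end a (S n)))).
Proof.
  pose proof (g_mediant_iter_cyl n (a n)) as E.
  pose proof (farey_or_ratio_dist _ _ _
    (farey_or_mediant_iter _ _ _ (a n) (cyl_farey a a_pos n))) as D.
  pose proof (mediant_iter_between _ _ _ (a n) (cyl_farey a a_pos n)) as B.
  unfold cyl_incr, cyl_hi, cyl_lo. rewrite even_succ, <- (cyl_end_succ_iter a) in *.
  destruct (Nat.even n); cbn [negb] in *;
    [rewrite Rabs_right in D by lra | rewrite Rabs_left in D by lra]; split; lra.
Qed.

End CylinderIncrements.

Lemma weight_pow_lower b j : (j <= 3)%nat -> lam ^ 6 <= weight b ^ j.
Proof.
  intro Hj. destruct (weight_bounds b) as [[W _] _]. pose proof lam_bounds.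
  replace (lam ^ 6) with ((lam * lam) ^ 3) by ring.
  eapply Rle_trans; [apply pow_le_one_antimono; [nra | exact Hj] | apply pow_incr; nra].
Qed.

Lemma succ_level_of_parity n b : exists k, (S n <= k <= S (S n))%nat /\ Nat.even k = b.
Proof.
  destruct (Bool.bool_dec (Nat.even (S n)) b) as [E|E].
  - exists (S n). split; [lia | exact E].
  - exists (S (S n)). split; [lia|]. rewrite even_succ. destruct b, (Nat.even (S n)); easy.
Qed.

Section BoundedQuotients.

Variables (g : R -> R) (a : nat -> nat) (x : R).
Hypothesis g_DTU : is_DTU lam g.
Hypothesis a_pos : forall k, (1 <= a k)%nat.
Hypothesis a_le_3 : forall k, (a k <= 3)%nat.
Hypothesis x_in : forall n, cyl_lo a n < x < cyl_hi a n.

Lemma cyl_incr_succ_lower n : lam ^ 8 * cyl_incr g a n <= cyl_incr g a (S n).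
Proof.
  rewrite (cyl_incr_succ g a g_DTU a_pos). pose proof (cyl_incr_nonneg g a g_DTU a_pos n).
  pose proof (weight_pow_lower (Nat.even n) (a n - 1) ltac:(specialize (a_le_3 n); lia)).
  destruct (weight_bounds (Nat.even n)) as [_ [W _]]. pose proof lam_bounds.
  apply Rmult_le_compat_r; [assumption|]. replace (lam ^ 8) with (lam ^ 6 * (lam * lam)) by ring.
  apply Rmult_le_compat; try apply pow_le; nra.
Qed.

Lemma cyl_den_succ_upper n : cyl_den a (S n) <= 20 * cyl_den a n.
Proof.
  unfold cyl_den, cyl_end, mediant. rewrite conv_succ, conv_prev_succ. cbn [fst snd].
  destruct (conv_den_pos a a_pos n). specialize (a_le_3 n).
  replace 20 with (INR 20) by (simpl; lra). rewrite <- !mult_INR. apply le_INR. nia.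
Qed.

Lemma cyl_descendant n k : (S n <= k <= S (S n))%nat ->
  lam ^ 16 * cyl_incr g a n <= cyl_incr g a k /\ cyl_den a k <= 400 * cyl_den a n.
Proof.
  intros Hk. pose proof (cyl_incr_succ_lower n). pose proof (cyl_incr_succ_lower (S n)).
  pose proof (cyl_den_succ_upper n). pose proof (cyl_den_succ_upper (S n)).
  pose proof (cyl_incr_nonneg g a g_DTU a_pos n).
  pose proof (cyl_incr_nonneg g a g_DTU a_pos (S n)).
  assert (0 <= cyl_den a n) by (unfold cyl_den; apply Rmult_le_pos; apply pos_INR).
  pose proof lam_bounds. pose proof (pow_le lam 8 ltac:(lra)).
  pose proof (pow_le_one_antimono lam 0 8 ltac:(lra) ltac:(lia)).
  replace (lam ^ 16) with (lam ^ 8 * lam ^ 8) by ring.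
  destruct (Nat.eq_dec k (S n)) as [->|Hne]; [split; nra|].
  replace k with (S (S n)) by lia. split; nra.
Qed.

Lemma cyl_gap_lower n :
  lam ^ 6 * cyl_incr g a n <=
    (if Nat.even n then g (cyl_lo a (S n)) - g (cyl_lo a n)
     else g (cyl_hi a n) - g (cyl_hi a (S n))) /\
  / (5 * cyl_den a n) <=
    (if Nat.even n then cyl_lo a (S n) - cyl_lo a n else cyl_hi a n - cyl_hi a (S n)).
Proof.
  destruct (cyl_gap g a g_DTU a_pos n) as [Eg El]. rewrite Eg, El. split.
  - apply Rmult_le_compat_r; [apply cyl_incr_nonneg; assumption|].
    apply weight_pow_lower, a_le_3.
  - unfold cyl_den. rewrite (cyl_end_succ_iter a), mediant_iter_eq. unfold cyl_end, mediant.
    destruct (conv_den_pos a a_pos n). specialize (a_le_3 n). cbn [fst snd].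
    apply Rinv_le_contravar; [apply Rmult_lt_0_compat; apply lt_0_INR; lia|].
    replace 5 with (INR 5) by (simpl; lra). rewrite <- !mult_INR. apply le_INR. nia.
Qed.

Lemma cyl_den_pos n : 0 < cyl_den a n.
Proof.
  pose proof (cyl_den_lower a a_pos n). assert (0 < INR (S n)) by (apply lt_0_INR; lia). lra.
Qed.

Lemma cyl_gap_length_lower n k : (S n <= k <= S (S n))%nat ->
  / 2000 * (cyl_hi a n - cyl_lo a n) <= / (5 * cyl_den a k).
Proof.
  intros Hk. destruct (cyl_descendant n k Hk) as [_ Dd]. rewrite (cyl_length a a_pos).
  pose proof (cyl_den_pos n). pose proof (cyl_den_pos k).
  rewrite <- Rinv_mult. apply Rinv_le_contravar; lra.
Qed.

Lemma cyl_gap_left n : exists u v, cyl_lo a (S n) <= u <= v /\ v <= x /\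
  lam ^ 22 * (g (cyl_hi a n) - g (cyl_lo a n)) <= g v - g u /\
  / 2000 * (cyl_hi a n - cyl_lo a n) <= v - u.
Proof.
  destruct (succ_level_of_parity n true) as [k [Hk Ek]].
  destruct (cyl_descendant n k Hk) as [Di _]. pose proof (cyl_gap_length_lower n k Hk).
  destruct (cyl_gap_lower k) as [Gg Gl]. rewrite Ek in Gg, Gl.
  exists (cyl_lo a k), (cyl_lo a (S k)). pose proof lam_bounds.
  assert (0 <= lam ^ 6) by (apply pow_le; lra).
  pose proof (Rinv_0_lt_compat _ (Rmult_lt_0_compat 5 _ ltac:(lra) (cyl_den_pos k))).
  destruct (cyl_lo_mono a a_pos (S n) k ltac:(lia)). pose proof (x_in (S k)).
  repeat split; try lra.
  change (g (cyl_hi a n) - g (cyl_lo a n)) with (cyl_incr g a n).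
  replace (lam ^ 22) with (lam ^ 6 * lam ^ 16) by ring. rewrite Rmult_assoc.
  eapply Rle_trans; [apply Rmult_le_compat_l; [exact H1 | exact Di] | exact Gg].
Qed.

Lemma cyl_gap_right n : exists u v, x <= u <= v /\ v <= cyl_hi a (S n) /\
  lam ^ 22 * (g (cyl_hi a n) - g (cyl_lo a n)) <= g v - g u /\
  / 2000 * (cyl_hi a n - cyl_lo a n) <= v - u.
Proof.
  destruct (succ_level_of_parity n false) as [k [Hk Ek]].
  destruct (cyl_descendant n k Hk) as [Di _]. pose proof (cyl_gap_length_lower n k Hk).
  destruct (cyl_gap_lower k) as [Gg Gl]. rewrite Ek in Gg, Gl.
  exists (cyl_hi a (S k)), (cyl_hi a k). pose proof lam_bounds.
  assert (0 <= lam ^ 6) by (apply pow_le; lra).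
  pose proof (Rinv_0_lt_compat _ (Rmult_lt_0_compat 5 _ ltac:(lra) (cyl_den_pos k))).
  destruct (cyl_lo_mono a a_pos (S n) k ltac:(lia)). pose proof (x_in (S k)).
  repeat split; try lra.
  change (g (cyl_hi a n) - g (cyl_lo a n)) with (cyl_incr g a n).
  replace (lam ^ 22) with (lam ^ 6 * lam ^ 16) by ring. rewrite Rmult_assoc.
  eapply Rle_trans; [apply Rmult_le_compat_l; [exact H1 | exact Di] | exact Gg].
Qed.

Lemma slope_cyl n : slope g (cyl_lo a) (cyl_hi a) n = cyl_slope g a n.
Proof.
  unfold slope, cyl_slope, cyl_incr. rewrite (cyl_length a a_pos).
  pose proof (cyl_den_pos n). field. lra.
Qed.

Lemma cyl_contains n : 0 <= cyl_lo a n < x /\ x < cyl_hi a n <= 1.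
Proof. pose proof (x_in n). pose proof (cyl_range a a_pos n). lra. Qed.

Lemma lam_pow_22_pos : 0 < lam ^ 22.
Proof. apply pow_lt. pose proof lam_bounds. lra. Qed.

Theorem derivative_p_infty_of_cyl_slope : is_lim_seq (cyl_slope g a) p_infty ->
  is_lim (fun h => (g (x + h) - g x) / h) 0 p_infty.
Proof.
  intros Hs.
  apply (derivative_p_infty_of_slope g (cyl_lo a) (cyl_hi a) x (lam ^ 22) (/ 2000)).
  - exact (g_mono g g_DTU).
  - exact cyl_contains.
  - exact (cyl_length_cvg a a_pos).
  - exact lam_pow_22_pos.
  - lra.
  - exact cyl_gap_left.
  - exact cyl_gap_right.
  - eapply is_lim_seq_ext; [|exact Hs]. intro n. symmetry. apply slope_cyl.
Qed.

Theorem derivative_zero_of_cyl_slope : is_lim_seq (cyl_slope g a) 0 -> is_derive g x 0.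
Proof.
  intros Hs.
  apply (derivative_zero_of_slope g (cyl_lo a) (cyl_hi a) x (lam ^ 22) (/ 2000)).
  - exact (g_mono g g_DTU).
  - exact cyl_contains.
  - exact (cyl_length_cvg a a_pos).
  - exact lam_pow_22_pos.
  - lra.
  - exact cyl_gap_left.
  - exact cyl_gap_right.
  - eapply is_lim_seq_ext; [|exact Hs]. intro n. symmetry. apply slope_cyl.
Qed.

End BoundedQuotients.

(** * The slope recursion *)

Lemma lam_pow_bounds k : 0.618033 ^ k <= lam ^ k <= 0.618034 ^ k.
Proof. pose proof lam_bounds. split; apply pow_incr; lra. Qed.

Lemma weight_pow_mul b j :
  weight b ^ j * (1 - weight b) = if b then lam ^ (j + 2) else lam ^ (2 * j + 1).
Proof.
  pose proof lam_sq as E. destruct b; simpl weight.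
  - rewrite pow_add, <- E. ring.
  - replace (1 - (1 - lam)) with lam by ring. rewrite <- E, pow_add, pow_mult.
    replace (lam ^ 2) with (lam * lam) by ring. ring.
Qed.

Lemma scaled_le (D c k X Y r : R) : 0 <= D -> c <= k -> 0 <= Y -> r * X <= c * Y ->
  r * (D * X) <= k * D * Y.
Proof.
  intros HD Hck HY H. apply Rle_trans with (D * (c * Y)).
  - replace (r * (D * X)) with (D * (r * X)) by ring. now apply Rmult_le_compat_l.
  - replace (k * D * Y) with (D * (k * Y)) by ring. apply Rmult_le_compat_l; [assumption|].
    now apply Rmult_le_compat_r.
Qed.

Lemma scaled_ge (D c k X Y r : R) : 0 <= D -> k <= c -> 0 <= Y -> c * Y <= r * X ->
  k * D * Y <= r * (D * X).
Proof.
  intros HD Hck HY H. apply Rle_trans with (D * (c * Y)).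
  - replace (k * D * Y) with (D * (k * Y)) by ring. apply Rmult_le_compat_l; [assumption|].
    now apply Rmult_le_compat_r.
  - replace (r * (D * X)) with (D * (r * X)) by ring. now apply Rmult_le_compat_l.
Qed.

Section SlopeRecursion.

Variables (g : R -> R) (a : nat -> nat).
Hypothesis g_DTU : is_DTU lam g.
Hypothesis a_pos : forall k, (1 <= a k)%nat.

Let q m := INR (snd (conv a m)).
Let q' m := INR (snd (conv_prev a m)).

Lemma cyl_slope_eq m : cyl_slope g a m = cyl_incr g a m * (q m * (q m + q' m)).
Proof.
  unfold cyl_slope, cyl_den, cyl_end, mediant, q, q'. cbn [snd]. rewrite plus_INR. reflexivity.
Qed.

Lemma den_succ m : q (S m) = INR (a m) * q m + q' m /\ q' (S m) = q m.
Proof.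
  unfold q, q'. rewrite conv_succ, conv_prev_succ. cbn [snd]. rewrite plus_INR, mult_INR. auto.
Qed.

Lemma cyl_slope_succ_even m : Nat.even m = true ->
  cyl_slope g a (S m) =
    lam ^ (a m + 1) * cyl_incr g a m * ((INR (a m) * q m + q' m) * ((INR (a m) + 1) * q m + q' m)).
Proof.
  intro Ev. destruct (den_succ m) as [E1 E2].
  rewrite cyl_slope_eq, (cyl_incr_succ g a g_DTU a_pos), E1, E2, Rmult_assoc, weight_pow_mul, Ev.
  replace (a m - 1 + 2)%nat with (a m + 1)%nat by (specialize (a_pos m); lia). ring.
Qed.

Lemma cyl_slope_succ_succ_even m : Nat.even m = true ->
  cyl_slope g a (S (S m)) =
    lam ^ (a m + 2 * a (S m)) * cyl_incr g a m *
    ((INR (a (S m)) * (INR (a m) * q m + q' m) + q m) *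
     ((INR (a (S m)) + 1) * (INR (a m) * q m + q' m) + q m)).
Proof.
  intro Ev. destruct (den_succ (S m)) as [E1 E2]. destruct (den_succ m) as [E3 E4].
  rewrite cyl_slope_eq, (cyl_incr_succ g a g_DTU a_pos), (cyl_incr_succ g a g_DTU a_pos).
  rewrite E1, E2, E3, E4, even_succ, Ev. cbn [negb].
  rewrite !weight_pow_mul.
  replace (a m + 2 * a (S m))%nat with ((2 * (a (S m) - 1) + 1) + (a m - 1 + 2))%nat
    by (pose proof (a_pos m); pose proof (a_pos (S m)); lia).
  rewrite (pow_add lam (2 * (a (S m) - 1) + 1)). ring.
Qed.

Lemma den_bounds m : 1 <= q m /\ 0 <= q' m <= q m.
Proof.
  unfold q, q'. destruct (conv_den_pos a a_pos m) as [H1 H2]. split.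
  - replace 1 with (INR 1) by reflexivity. apply le_INR. lia.
  - split; [apply pos_INR | apply le_INR; lia].
Qed.

Lemma slope_growth_half m : Nat.even m = true -> (a m <= 2)%nat ->
  0.7 * cyl_slope g a m <= cyl_slope g a (S m).
Proof.
  intros Ev Ha. rewrite (cyl_slope_succ_even m Ev), cyl_slope_eq.
  pose proof (cyl_incr_nonneg g a g_DTU a_pos m). destruct (den_bounds m).
  assert (Ham : a m = 1%nat \/ a m = 2%nat) by (specialize (a_pos m); lia).
  destruct Ham as [-> | ->];
    pose proof (lam_pow_bounds (1 + 1)); pose proof (lam_pow_bounds (2 + 1)); simpl in *.
  - apply scaled_le with (c := 0.38196); nra.
  - apply scaled_le with (c := 0.236); nra.
Qed.

Lemma slope_growth_step m : Nat.even m = true -> (a m <= 2)%nat -> (a (S m) <= 2)%nat ->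
  1.05 * cyl_slope g a m <= cyl_slope g a (S (S m)).
Proof.
  intros Ev Ha Hb. rewrite (cyl_slope_succ_succ_even m Ev), cyl_slope_eq.
  pose proof (cyl_incr_nonneg g a g_DTU a_pos m). destruct (den_bounds m).
  assert (Ham : a m = 1%nat \/ a m = 2%nat) by (specialize (a_pos m); lia).
  assert (Hbm : a (S m) = 1%nat \/ a (S m) = 2%nat) by (specialize (a_pos (S m)); lia).
  destruct Ham as [-> | ->], Hbm as [-> | ->];
    pose proof (lam_pow_bounds 3); pose proof (lam_pow_bounds 4);
    pose proof (lam_pow_bounds 5); pose proof (lam_pow_bounds 6); simpl in *.
  - apply scaled_le with (c := 0.236); nra.
  - apply scaled_le with (c := 0.0901); nra.
  - apply scaled_le with (c := 0.1458); nra.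
  - apply scaled_le with (c := 0.0557); nra.
Qed.

Lemma slope_decay_half m : Nat.even m = true -> a m = 1%nat ->
  cyl_slope g a (S m) <= 1.2 * cyl_slope g a m.
Proof.
  intros Ev Ha. rewrite (cyl_slope_succ_even m Ev), cyl_slope_eq, Ha.
  pose proof (cyl_incr_nonneg g a g_DTU a_pos m). destruct (den_bounds m).
  pose proof (lam_pow_bounds (1 + 1)). simpl in *.
  apply scaled_ge with (c := 0.382); nra.
Qed.

Lemma slope_decay_step m : Nat.even m = true -> a m = 1%nat -> a (S m) = 3%nat ->
  3 * q' m <= q m -> cyl_slope g a (S (S m)) <= 0.85 * cyl_slope g a m.
Proof.
  intros Ev Ha Hb Hq. rewrite (cyl_slope_succ_succ_even m Ev), cyl_slope_eq, Ha, Hb.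
  pose proof (cyl_incr_nonneg g a g_DTU a_pos m). destruct (den_bounds m).
  pose proof (lam_pow_bounds 7). simpl in *.
  apply scaled_ge with (c := 0.0345); [nra | lra | nra |].
  assert (0 <= (q m - 3 * q' m) * q' m) by nra. assert (0 <= (q m - 3 * q' m) * q m) by nra. nra.
Qed.

Lemma den_prev_third (a_odd : forall k, Nat.even k = false -> a k = 3%nat) m :
  Nat.even m = true -> 3 * q' m <= q m.
Proof.
  intro Ev. destruct m as [|m]; [unfold q, q'; simpl; lra|].
  destruct (den_succ m) as [E1 E2]. rewrite E1, E2, a_odd.
  - pose proof (den_bounds m). simpl. lra.
  - rewrite even_succ in Ev. destruct (Nat.even m); easy.
Qed.

End SlopeRecursion.

Lemma is_lim_seq_div2 (u : nat -> R) (l : Rbar) :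
  is_lim_seq u l -> is_lim_seq (fun n => u (Nat.div2 n)) l.
Proof.
  apply is_lim_seq_subseq. intros P [N HN]. exists (2 * N)%nat. intros n Hn.
  apply HN, Nat.div2_le_lower_bound. exact Hn.
Qed.

Lemma div2_geometric_lower (u : nat -> R) (r c : R) : 0 <= r -> 0 <= c <= 1 -> 0 <= u O ->
  (forall k, r * u (2 * k)%nat <= u (S (S (2 * k)))) ->
  (forall k, c * u (2 * k)%nat <= u (S (2 * k))) ->
  forall n, c * (r ^ Nat.div2 n * u O) <= u n.
Proof.
  intros Hr Hc H0 Hstep Hhalf.
  assert (Heven : forall k, r ^ k * u O <= u (2 * k)%nat).
  { induction k as [|k IH]; [simpl; lra|].
    replace (2 * S k)%nat with (S (S (2 * k))) by lia.
    eapply Rle_trans; [|apply Hstep]. simpl. rewrite Rmult_assoc. now apply Rmult_le_compat_l. }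
  intro n. destruct (Nat.Even_or_Odd n) as [[k ->]|[k ->]].
  - rewrite Nat.div2_double. pose proof (Heven k).
    assert (0 <= r ^ k * u O) by (apply Rmult_le_pos; [apply pow_le|]; lra). nra.
  - rewrite Nat.add_1_r, Nat.div2_succ_double. eapply Rle_trans; [|apply Hhalf].
    apply Rmult_le_compat_l; [lra | apply Heven].
Qed.

Lemma div2_geometric_upper (u : nat -> R) (r C : R) : 0 <= r -> 1 <= C -> 0 <= u O ->
  (forall k, u (S (S (2 * k))) <= r * u (2 * k)%nat) ->
  (forall k, u (S (2 * k)) <= C * u (2 * k)%nat) ->
  forall n, u n <= C * (r ^ Nat.div2 n * u O).
Proof.
  intros Hr HC H0 Hstep Hhalf.
  assert (Heven : forall k, u (2 * k)%nat <= r ^ k * u O).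
  { induction k as [|k IH]; [simpl; lra|].
    replace (2 * S k)%nat with (S (S (2 * k))) by lia.
    eapply Rle_trans; [apply Hstep|]. simpl. rewrite Rmult_assoc. now apply Rmult_le_compat_l. }
  intro n. destruct (Nat.Even_or_Odd n) as [[k ->]|[k ->]].
  - rewrite Nat.div2_double. pose proof (Heven k).
    assert (0 <= r ^ k * u O) by (apply Rmult_le_pos; [apply pow_le|]; lra). nra.
  - rewrite Nat.add_1_r, Nat.div2_succ_double. eapply Rle_trans; [apply Hhalf|].
    apply Rmult_le_compat_l; [lra | apply Heven].
Qed.

Lemma even_double k : Nat.even (2 * k) = true.
Proof. rewrite Nat.even_mul. reflexivity. Qed.

Section SlopeLimits.

Variables (g : R -> R) (a : nat -> nat).
Hypothesis g_DTU : is_DTU lam g.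
Hypothesis a_pos : forall k, (1 <= a k)%nat.

Lemma cyl_slope_0 : cyl_slope g a 0 = 1.
Proof.
  rewrite (cyl_slope_eq g a), (cyl_incr_0 g a g_DTU). simpl. ring.
Qed.

Theorem cyl_slope_p_infty : (forall k, (a k <= 2)%nat) -> is_lim_seq (cyl_slope g a) p_infty.
Proof.
  intros a_le_2.
  assert (B : forall n, 1.05 ^ Nat.div2 n * 0.7 <= cyl_slope g a n).
  { intro n. pose proof (div2_geometric_lower (cyl_slope g a) 1.05 0.7 ltac:(lra) ltac:(lra)
      ltac:(rewrite cyl_slope_0; lra)
      (fun k => slope_growth_step g a g_DTU a_pos _ (even_double k) (a_le_2 _) (a_le_2 _))
      (fun k => slope_growth_half g a g_DTU a_pos _ (even_double k) (a_le_2 _)) n) as H.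
    rewrite cyl_slope_0 in H. lra. }
  apply is_lim_seq_le_p_loc with (fun n => 1.05 ^ Nat.div2 n * 0.7).
  - exists O. intros n _. apply B.
  - eapply is_lim_seq_mult; [apply is_lim_seq_div2, is_lim_seq_geom_p; lra
      | apply is_lim_seq_const | apply is_Rbar_mult_p_infty_pos; simpl; lra].
Qed.

Theorem cyl_slope_zero : (forall k, a k = if Nat.even k then 1%nat else 3%nat) ->
  is_lim_seq (cyl_slope g a) 0.
Proof.
  intros a_alt.
  assert (a_even : forall k, Nat.even k = true -> a k = 1%nat)
    by (intros k Hk; now rewrite a_alt, Hk).
  assert (a_odd : forall k, Nat.even k = false -> a k = 3%nat)
    by (intros k Hk; now rewrite a_alt, Hk).
  assert (Hodd : forall k, Nat.even (S (2 * k)) = false)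
    by (intro k; now rewrite even_succ, even_double).
  pose proof (div2_geometric_upper (cyl_slope g a) 0.85 1.2 ltac:(lra) ltac:(lra)
    ltac:(rewrite cyl_slope_0; lra)
    (fun k => slope_decay_step g a g_DTU a_pos _ (even_double k) (a_even _ (even_double k))
       (a_odd _ (Hodd k)) (den_prev_third a a_pos a_odd _ (even_double k)))
    (fun k => slope_decay_half g a g_DTU a_pos _ (even_double k) (a_even _ (even_double k)))) as U.
  apply is_lim_seq_le_le with (u := fun _ => 0) (w := fun n => 1.2 * (0.85 ^ Nat.div2 n * 1)).
  - intro n. split; [apply cyl_slope_nonneg; assumption|].
    specialize (U n). rewrite cyl_slope_0 in U. exact U.
  - apply is_lim_seq_const.
  - replace (Finite 0) with (Rbar_mult 1.2 (Rbar_mult 0 1)) by (simpl; f_equal; ring).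
    apply is_lim_seq_scal_l, is_lim_seq_scal_r, is_lim_seq_div2, is_lim_seq_geom.
    rewrite Rabs_right; lra.
Qed.

End SlopeLimits.

(** * The point [[0; 1, 3, 1, 3, ...]] *)

(* [y0 = [0; 1, 3, 1, 3, ...]] and [z0 = [0; 3, 1, 3, 1, ...]]. *)
Definition y0 : R := (sqrt 21 - 3) / 2.
Definition z0 : R := (sqrt 21 - 3) / 6.

Lemma y0_z0_facts : 0 < y0 < 1 /\ 0 < z0 < 1 /\ / y0 = 1 + z0 /\ / z0 = 3 + y0.
Proof.
  assert (E := sqrt_sqrt 21 ltac:(lra)). assert (H0 := sqrt_pos 21).
  assert (B : 4.58 < sqrt 21 < 4.59) by (split; nra).
  unfold y0, z0. repeat split; try lra; field_simplify_eq; try lra;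
    replace (sqrt 21 ^ 2) with (sqrt 21 * sqrt 21) by ring; lra.
Qed.

Lemma Int_part_eq r k : IZR k <= r < IZR k + 1 -> Int_part r = k.
Proof.
  intros [H1 H2]. unfold Int_part. rewrite <- (tech_up r (k + 1)); [ring | |];
    rewrite plus_IZR; simpl; lra.
Qed.

Lemma gauss_y0 n : Nat.iter n gauss y0 = if Nat.even n then y0 else z0.
Proof.
  destruct y0_z0_facts as [Y [Z [E1 E2]]].
  induction n as [|n IH]; [reflexivity|].
  change (Nat.iter (S n) gauss y0) with (gauss (Nat.iter n gauss y0)). rewrite IH, even_succ.
  unfold gauss. destruct (Nat.even n); simpl.
  - rewrite E1, (Int_part_eq _ 1); simpl; lra.
  - rewrite E2, (Int_part_eq _ 3); simpl; lra.
Qed.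

Lemma pq_y0 n : pq y0 n = if Nat.even n then 1%Z else 3%Z.
Proof.
  destruct y0_z0_facts as [Y [Z [E1 E2]]].
  unfold pq. rewrite gauss_y0. destruct (Nat.even n).
  - rewrite E1. apply Int_part_eq. simpl. lra.
  - rewrite E2. apply Int_part_eq. simpl. lra.
Qed.

Lemma three_dvd_of_square (s : Z) : (3 | s * s)%Z -> (3 | s)%Z.
Proof. intro H. destruct (prime_mult 3 prime_3 s s H); assumption. Qed.

(* Infinite descent: [s^2 = 21 t^2] forces [3 | s], then [3 | t]. *)
Lemma no_square_ratio_21 : forall n (s t : Z),
  (Z.abs_nat t <= n)%nat -> (s * s = 21 * (t * t))%Z -> t = 0%Z.
Proof.
  induction n as [|n IH]; intros s t Hn E; [lia|].
  destruct (three_dvd_of_square s) as [s' ->]; [exists (7 * (t * t))%Z; lia|].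
  destruct (three_dvd_of_square t) as [t' ->].
  { assert (H3 : (3 | 7 * (t * t))%Z) by (exists (s' * s')%Z; nia).
    destruct (prime_mult 3 prime_3 7 (t * t) H3) as [H7|H]; [|exact H].
    destruct H7 as [c Hc]; lia. }
  assert (t' = 0%Z) by (apply (IH s' t'); nia). lia.
Qed.

Lemma y0_irrational : irrational y0.
Proof.
  intros p q Hq E. assert (S21 := sqrt_sqrt 21 ltac:(lra)). unfold y0 in E.
  apply not_0_IZR in Hq as Hq'.
  assert (Hs : sqrt 21 = IZR (2 * p + 3 * q) / IZR q).
  { rewrite plus_IZR, !mult_IZR. simpl. apply (f_equal (fun r => 2 * r + 3)) in E.
    field_simplify in E; [|exact Hq']. rewrite <- E. field; exact Hq'. }
  rewrite Hs in S21. apply Hq. apply (no_square_ratio_21 (Z.abs_nat q) (2 * p + 3 * q) q (le_n _)).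
  apply eq_IZR. rewrite !mult_IZR. field_simplify in S21; [|exact Hq'].
  rewrite <- S21. field. exact Hq'.
Qed.

Theorem theorem3 (g : R -> R) (Hg : is_DTU (/ phi) g) :
  (forall x : R, 0 <= x <= 1 -> irrational x ->
     (forall n : nat, (pq x n <= 2)%Z) ->
     is_lim (fun h => (g (x + h) - g x) / h) (Finite 0) p_infty)
  /\
  (exists y : R, 0 <= y <= 1 /\ irrational y /\
     (forall n : nat, (pq y n <= 3)%Z) /\
     is_derive g y 0).
Proof.
  split.
  - intros x Hx Hi H2.
    assert (a_le_2 : forall k, (pq_nat x k <= 2)%nat)
      by (intro k; specialize (H2 k); unfold pq_nat; lia).
    apply (derivative_p_infty_of_cyl_slope g (pq_nat x) x Hg (pq_nat_pos x Hx Hi)).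
    + intro k. specialize (a_le_2 k). lia.
    + exact (in_cylinders x Hx Hi).
    + exact (cyl_slope_p_infty g (pq_nat x) Hg (pq_nat_pos x Hx Hi) a_le_2).
  - destruct y0_z0_facts as [Y _].
    assert (Hy : 0 <= y0 <= 1) by lra.
    assert (a_alt : forall k, pq_nat y0 k = if Nat.even k then 1%nat else 3%nat)
      by (intro k; unfold pq_nat; rewrite pq_y0; destruct (Nat.even k); reflexivity).
    exists y0. split; [exact Hy|]. split; [exact y0_irrational|].
    split; [intro n; rewrite pq_y0; destruct (Nat.even n); lia|].
    apply (derivative_zero_of_cyl_slope g (pq_nat y0) y0 Hg (pq_nat_pos y0 Hy y0_irrational)).
    + intro k. rewrite a_alt. destruct (Nat.even k); lia.
    + exact (in_cylinders y0 Hy y0_irrational).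
    + exact (cyl_slope_zero g (pq_nat y0) Hg (pq_nat_pos y0 Hy y0_irrational) a_alt).
Qed.
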